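(* Let $(S,d)$ be a complete metric space with a Hausdorff topology $\sigma$ compatible with $d$, and let $\phi,\phi_\epsilon:S\to(-\infty,+\infty]$ ($\epsilon>0$) have nonempty effective domains. Suppose there exist $A,B>0$, $u_\star\in S$ with $\phi_\epsilon(\cdot)\ge-A-Bd^2(\cdot,u_\star)$ for all $\epsilon>0$; that each $\phi_\epsilon$ satisfies (i) $\sup_{n,m}d(u_n,u_m)<+\infty$, $u_n\stackrel{\sigma}{\rightharpoonup}u$ $\Rightarrow$ $\liminf_n\phi_\epsilon(u_n)\ge\phi_\epsilon(u)$, and (ii) $\sup_{n,m}\{d(u_n,u_m),\phi_\epsilon(u_n)\}<+\infty$ $\Rightarrow$ some subsequence of $(u_n)$ $\sigma$-converges in $S$; and that the local slopes satisfy: whenever $\epsilon_n\to0$ and $u_n\stackrel{\sigma}{\rightharpoonup}u$, $\liminf_n|\partial\phi_{\epsilon_n}|(u_n)\ge|\partial\phi|(u)$. Then for every choice $\epsilon(\tau)>0$ with $\epsilon(\tau)\to0$ as $\tau\to0$: for all $u,u_\tau\in S$ with $u_\tau\stackrel{\sigma}{\rightharpoonup}u$ and $\sup_\tau\{\phi_{\epsilon(\tau)}(u_\tau),d(u_\tau,u)\}<+\infty$, $$\liminf_{\tau\to0}\frac{\phi_{\epsilon(\tau)}(u_\tau)-\mathcal{Y}_\tau\phi_{\epsilon(\tau)}(u_\tau)}{\tau}\ge\frac12|\partial^-\phi|^2(u).$$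
   Context: $\sigma$ compatible with $d$: if $u_n\stackrel{\sigma}{\rightharpoonup}u$, $v_n\stackrel{\sigma}{\rightharpoonup}v$ then $\liminf_n d(u_n,v_n)\ge d(u,v)$; if $d(u_n,v_n)\to0$ and $u_n\stackrel{\sigma}{\rightharpoonup}u$ then $v_n\stackrel{\sigma}{\rightharpoonup}u$. Local slope $|\partial f|(v)=\limsup_{w\stackrel{d}{\to}v}\frac{(f(v)-f(w))^+}{d(v,w)}$ for $f(v)<\infty$; relaxed slope $|\partial^-f|(u)=\inf\{\liminf_n|\partial f|(u_n): u_n\stackrel{\sigma}{\rightharpoonup}u,\ \sup_n\{d(u_n,u),f(u_n)\}<+\infty\}$; $\mathcal{Y}_\tau f(u)=\inf_{v\in S}\{f(v)+\frac1{2\tau}d^2(v,u)\}$. *)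

From HB Require Import structures.
From mathcomp Require Import all_boot all_order all_algebra.
From mathcomp Require Import all_classical all_reals all_analysis.
Set Implicit Arguments. Unset Strict Implicit. Unset Printing Implicit Defensive.
Import Order.TTheory GRing.Theory Num.Theory.
Import numFieldNormedType.Exports.
Local Open Scope classical_set_scope.
Local Open Scope ring_scope.

Section Defs.
Context {R : realType} {S : topologicalType}.
Implicit Types (d : S -> S -> R).

Definition is_metric d : Prop :=
  [/\ forall x y, 0 <= d x y,
      forall x y, d x y = 0 <-> x = y,
      forall x y, d x y = d y x &
      forall x y z, d x z <= d x y + d y z].

Definition d_complete d : Prop :=
  forall u : nat -> S,
    (forall e : R, 0 < e -> exists N : nat, forall n m : nat,
        (N <= n)%N -> (N <= m)%N -> d (u n) (u m) < e) ->
    exists x : S, (fun n => d (u n) x) @ \oo --> (0 : R).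

Definition sigma_compatible d : Prop :=
  (forall (u v : nat -> S) (x y : S), u @ \oo --> x -> v @ \oo --> y ->
     (d x y)%:E <= limn_einf (fun n => (d (u n) (v n))%:E))%E /\
  (forall (u v : nat -> S) (x : S),
     (fun n => d (u n) (v n)) @ \oo --> (0 : R) -> u @ \oo --> x -> v @ \oo --> x).

(* local slope |∂f|(v); convention: +oo outside the effective domain,
   and 0 at d-isolated points *)
Definition slope d (f : S -> \bar R) (v : S) : \bar R :=
  if f v == +oo%E then +oo%E else
  ereal_inf [set ereal_sup ([set 0%E] `|`
      [set (maxe (f v - f w) 0 * ((d v w)^-1)%:E)%E | w in [set w | 0 < d v w < r]])
    | r in [set r : R | 0 < r]].

Definition relaxed_slope d (f : S -> \bar R) (u : S) : \bar R :=
  ereal_inf [set limn_einf (fun n => slope d f (un n)) | un in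
    [set un : nat -> S | un @ \oo --> u /\
       exists M : R, forall n, d (un n) u <= M /\ (f (un n) <= M%:E)%E]].

Definition yosida d (tau : R) (f : S -> \bar R) (u : S) : \bar R :=
  ereal_inf [set (f v + (d v u ^+ 2 / (2 * tau))%:E)%E | v in [set: S]].

End Defs.

Definition liminf0 {R : realType} (g : R -> \bar R) : \bar R :=
  ereal_sup [set ereal_inf [set g t | t in [set t : R | 0 < t < delta]]
            | delta in [set delta : R | 0 < delta]].

From HB Require Import structures.
From mathcomp Require Import all_boot all_order all_algebra.
From mathcomp Require Import all_classical all_reals all_analysis.
From mathcomp Require Import ring lra.
Import Order.TTheory GRing.Theory Num.Theory.
Import numFieldNormedType.Exports.
Local Open Scope classical_set_scope.
Local Open Scope ring_scope.

(* For small tau the Moreau-Yosida problem for phi_eps(tau) at u_tau has a minimiser at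
   every scale r <= tau: the quadratic lower bound makes the energy coercive once 8 B r <= 1,
   and compactness plus lower semicontinuity turn a minimising sequence into a minimiser.
   At a minimiser v the local slope is at most d(v, u_tau)/r, so the lower semicontinuity of
   slopes along eps -> 0 forces d(v, u_tau) >= sg r for every sg below the local slope of
   phi at u, uniformly for small tau. Comparing the Yosida values at the scales r and lam r then yields, for
   q(r) = (phi_eps(u_tau) - Y_r phi_eps(u_tau)) / r, the self-improving inequality
   q(r) >= lam q(lam r) + sg^2 lam (1 - lam) / 2, whence q >= sg^2 / 2 on (0, tau].
   Since the relaxed slope is at most the local slope, this gives the claim. *)

Section LiminfBounds.
Context {R : realType}.
Local Open Scope ereal_scope.
Implicit Types (u : (\bar R)^nat) (c : \bar R).

Lemma limn_einfE u : limn_einf u = ereal_sup (range (einfs u)).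
Proof. by rewrite limn_einf_lim; apply: cvg_lim => //; exact: cvg_einfs_sup. Qed.

Lemma limn_einf_gt_near c u : c < limn_einf u -> \forall n \near \oo, c < u n.
Proof.
rewrite limn_einfE => /ereal_sup_gt [_ [N _ <-] cN].
exists N => // n /= Nn; apply: (lt_le_trans cN); apply: ereal_inf_lbound.
by exists n.
Qed.

Lemma limn_einf_le_ub c u : (forall n, u n <= c) -> limn_einf u <= c.
Proof.
move=> uc; rewrite limn_einfE; apply: ge_ereal_sup => _ [N _ <-].
by apply: le_trans (uc N); apply: ereal_inf_lbound; exists N => /=.
Qed.

Lemma limn_einf_ge_lb c u : (forall n, c <= u n) -> c <= limn_einf u.
Proof.
move=> cu; rewrite limn_einfE; apply: le_trans (ereal_sup_ubound _); last by exists 0%N.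
by apply: le_ereal_inf_tmp => _ [n _ <-].
Qed.

End LiminfBounds.

Lemma liminf0_ge {R : realType} (g : R -> \bar R) (c : \bar R) (del : R) :
  0 < del -> (forall t, 0 < t < del -> (c <= g t)%E) -> (c <= liminf0 g)%E.
Proof.
move=> del0 cg; apply: le_trans (ereal_sup_ubound _); last by exists del.
by apply: le_ereal_inf_tmp => _ [t /cg ? <-].
Qed.

Lemma cvg_at_right_seq {R : realType} {t : R^nat} {p : R} :
  (forall n, p < t n) -> t @ \oo --> p -> t @ \oo --> p^'+.
Proof.
by move=> pt tp P /= /tp; apply: (@filterS _ \oo) => n /(_ (pt n)).
Qed.

Lemma quadratic_drop_le {R : realType} (a b r D1 D2 D3 e : R) :
  0 < r -> 0 < D3 -> D3 < 2 * r * e -> 0 <= D1 -> 0 <= D2 -> D2 <= D3 + D1 ->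
  a + D1 ^+ 2 / (2 * r) <= b + D2 ^+ 2 / (2 * r) -> a - b <= (D1 / r + e) * D3.
Proof.
move=> r0 D30 D3e D10 D20 D2le ab.
have r2 : 0 < 2 * r by rewrite mulr_gt0.
have ab2 : (a - b) * (2 * r) <= D2 ^+ 2 - D1 ^+ 2.
  have ir : 0 < (2 * r)^-1 by rewrite invr_gt0.
  rewrite -(ler_pM2r ir) -mulrA divff ?gt_eqF // mulr1 mulrBl; lra.
rewrite -(ler_pM2r r2).
have -> : (D1 / r + e) * D3 * (2 * r) = 2 * D1 * D3 + 2 * r * e * D3.
  by field; rewrite gt_eqF.
nra.
Qed.

Lemma energy_liminf_le {R : realType} (a : (\bar R)^nat) (b : R^nat) (al be y r : R) :
  0 < r -> 0 <= be -> (forall n, 0 <= b n) ->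
  (al%:E <= limn_einf a)%E -> (be%:E <= limn_einf (fun n => (b n)%:E))%E ->
  (forall n, (a n + (b n ^+ 2 / (2 * r))%:E <= (y + n.+1%:R^-1)%:E)%E) ->
  al + be ^+ 2 / (2 * r) <= y.
Proof.
move=> r0 be0 b0 al_a be_b ab_y; apply/ler_addgt0Pr => e e0.
have k0 : 0 < 2 + be / r by rewrite ltr_wpDr // divr_ge0 // ltW.
pose eta := e / (2 + be / r).
have eta0 : 0 < eta by rewrite divr_gt0.
have near_a : \forall n \near \oo, ((al - eta)%:E < a n)%E.
  by apply: limn_einf_gt_near; apply: lt_le_trans al_a; rewrite lte_fin gtrDl oppr_lt0.
have near_b : \forall n \near \oo, be - eta < b n.
  have : \forall n \near \oo, ((be - eta)%:E < (b n)%:E)%E.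
    by apply: limn_einf_gt_near; apply: lt_le_trans be_b; rewrite lte_fin gtrDl oppr_lt0.
  by apply: filterS => n; rewrite lte_fin.
have near_h : \forall n \near \oo, n.+1%:R^-1 < eta.
  exact: cvgr_lt 0 (@cvg_harmonic R) _ eta0.
near \oo => n.
have := ab_y n; have : ((al - eta)%:E < a n)%E by near: n; exact: near_a.
case: (a n) => [a0 | | ] //; rewrite ?lte_fin -?EFinD ?lee_fin => a0_gt ab.
have b_gt : be - eta < b n by near: n; exact: near_b.
have h_lt : n.+1%:R^-1 < eta by near: n; exact: near_h.
have q0 : 0 < (2 * r)^-1 by rewrite invr_gt0 mulr_gt0.
have b_sqr : be ^+ 2 - 2 * be * eta <= b n ^+ 2.
  have [le|lt] := leP eta be; have := b0 n; nra.
have -> : e = eta * (2 + 2 * be * (2 * r)^-1).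
  have -> : 2 * be * (2 * r)^-1 = be / r by field; rewrite gt_eqF.
  by rewrite /eta divfK ?gt_eqF.
have := ler_wpM2r (ltW q0) b_sqr; rewrite mulrBl; clearbody eta.
by move: ab h_lt; set h := n.+1%:R^-1; lra.
Unshelve. all: by end_near.
Qed.

Lemma ge_of_self_improving {R : realType} (g : R -> R) (k T : R) :
  (forall r, 0 < r <= T -> 0 <= g r) ->
  (forall r lam, 0 < r <= T -> 0 < lam < 1 -> lam * g (lam * r) + k * lam * (1 - lam) <= g r) ->
  forall r, 0 < r <= T -> k <= g r.
Proof.
move=> g_ge0 g_step s sT.
pose E := [set g r | r in [set r | 0 < r <= T]].
have E_gs : E (g s) by exists s.
have E_lb : lbound E 0 by move=> _ [r /g_ge0 ? <-].
have inf_le z : E z -> inf E <= z by apply: ge_inf; exists 0.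
have inf_ge0 : 0 <= inf E := lb_le_inf (ex_intro _ _ E_gs) E_lb.
have inf_ge lam : 0 < lam < 1 -> k * lam <= inf E.
  move=> /[dup] lam01 /andP[lam0 lam1].
  suff : lam * inf E + k * lam * (1 - lam) <= inf E by nra.
  apply: lb_le_inf; first by exists (g s).
  move=> _ [r /[dup] rT /andP[r0 r_T] <-]; apply: le_trans (g_step r lam rT lam01).
  rewrite lerD2r ler_pM2l //; apply: inf_le; exists (lam * r) => //=.
  by rewrite mulr_gt0 //=; apply: le_trans r_T; rewrite ler_piMl ?ltW.
apply: le_trans (inf_le _ E_gs); rewrite leNgt; apply/negP => inf_lt.
have k0 : 0 < k by apply: le_lt_trans inf_lt.
have q0 : 0 <= inf E / k by rewrite divr_ge0 // ltW.
have q1 : inf E / k < 1 by rewrite ltr_pdivrMr // mul1r.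
have lam01 : 0 < (inf E / k + 1) / 2 < 1 by apply/andP; split; lra.
have := inf_ge _ lam01.
have -> : k * ((inf E / k + 1) / 2) = (inf E + k) / 2 by field; rewrite gt_eqF.
lra.
Qed.

Lemma half_sqr_le {R : realType} (s L : \bar R) : (0 <= s)%E -> (0 <= L)%E ->
  (forall sg : R, 0 <= sg -> (sg%:E < s)%E -> ((sg ^+ 2 / 2)%:E <= L)%E) ->
  ((2^-1)%:E * (s * s) <= L)%E.
Proof.
case: L => [l | | ] // s0; rewrite ?leey // lee_fin => l0 sgL.
case: s s0 sgL => [rho | | ] // rho0 sgL; last first.
  exfalso; have := sgL (l + 1) (addr_ge0 l0 ler01) (ltry _); rewrite lee_fin; nra.
rewrite lee_fin in rho0; rewrite -!EFinM lee_fin.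
have rho_le : rho <= Num.sqrt (2 * l).
  rewrite leNgt; apply/negP => lt_rho; pose sg := (Num.sqrt (2 * l) + rho) / 2.
  have sqrt_ge0 := sqrtr_ge0 (2 * l).
  have := sgL sg; rewrite lte_fin lee_fin /sg => /(_ ltac:(lra) ltac:(lra)).
  have : Num.sqrt (2 * l) ^+ 2 < sg ^+ 2 by rewrite ltr_pXn2r ?nnegrE /sg //; lra.
  rewrite sqr_sqrtr ?mulr_ge0 // /sg; lra.
have : rho ^+ 2 <= 2 * l by rewrite -[2 * l]sqr_sqrtr ?mulr_ge0 // ler_pXn2r ?nnegrE ?sqrtr_ge0.
rewrite expr2; lra.
Qed.

Section MoreauYosida.
Context {R : realType} {S : topologicalType} {d : S -> S -> R}.
Implicit Types (f : S -> \bar R) (x v w : S) (r : R).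

Definition yosida_energy r f x v : \bar R := (f v + (d v x ^+ 2 / (2 * r))%:E)%E.

Definition yosida_argmin r f x v : Prop :=
  f v \is a fin_num /\ forall w, (yosida_energy r f x v <= yosida_energy r f x w)%E.

Definition yosida_quotient r f x : R := (fine (f x) - fine (yosida d r f x)) / r.

Definition bounded_lsc f : Prop :=
  forall (un : nat -> S) (w : S), (exists M : R, forall n m, d (un n) (un m) <= M) ->
    un @ \oo --> w -> (f w <= limn_einf (fun n => f (un n)))%E.

Definition bounded_sublevel_compact f : Prop :=
  forall un : nat -> S,
    (exists M : R, forall n m, d (un n) (un m) <= M /\ (f (un n) <= M%:E)%E) ->
    exists (h : nat -> nat) (w : S),
      (forall n, (h n < h n.+1)%N) /\ (fun n => un (h n)) @ \oo --> w.

Lemma yosida_le_energy r f x v : (yosida d r f x <= yosida_energy r f x v)%E.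
Proof. by apply: ereal_inf_lbound; exists v. Qed.

Lemma yosida_argminE {r f x v} : yosida_argmin r f x v -> yosida d r f x = yosida_energy r f x v.
Proof.
move=> [_ vmin]; apply/eqP; rewrite eq_le yosida_le_energy /=.
by apply: le_ereal_inf_tmp => _ [w _ <-]; exact: vmin.
Qed.

Lemma slope_ge0 f v : (0 <= slope d f v)%E.
Proof.
rewrite /slope; case: ifP => _; first by rewrite leey.
by apply: le_ereal_inf_tmp => _ [r _ <-]; apply: ereal_sup_ubound; left.
Qed.

Lemma relaxed_slope_ge0 f u : (0 <= relaxed_slope d f u)%E.
Proof.
apply: le_ereal_inf_tmp => _ [un _ <-].
by apply: limn_einf_ge_lb => n; exact: slope_ge0.
Qed.

(* Y_r <= E_r(v) = Y_(lam r) - D^2 (1 - lam) / (2 lam r) for the minimiser v at scale lam r,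
   and D >= sg lam r. *)
Lemma yosida_quotient_step {r lam sg f x v} :
  0 < r -> 0 < lam < 1 -> 0 <= sg -> yosida d r f x \is a fin_num ->
  yosida_argmin (lam * r) f x v -> sg * (lam * r) <= d v x ->
  lam * yosida_quotient (lam * r) f x + sg ^+ 2 / 2 * lam * (1 - lam) <= yosida_quotient r f x.
Proof.
move=> r0 /andP[lam0 lam1] sg0 Yr_fin vmin far.
have lr0 : 0 < lam * r by rewrite mulr_gt0.
have [a fv] : exists a, f v = a%:E by exists (fine (f v)); rewrite fineK //; case: vmin.
have Yr_le : fine (yosida d r f x) <= a + d v x ^+ 2 / (2 * r).
  by rewrite -lee_fin fineK // EFinD -fv; exact: yosida_le_energy.
rewrite /yosida_quotient (yosida_argminE vmin) /yosida_energy fv -EFinD /=.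
set p := fine (f x); set D := d v x in Yr_le far *; set Yr := fine (yosida d r f x) in Yr_le *.
have gain : sg ^+ 2 / 2 * lam * (1 - lam) * r <= D ^+ 2 / (2 * (lam * r)) - D ^+ 2 / (2 * r).
  have lr2 : 0 < 2 * (lam * r) by rewrite mulr_gt0.
  rewrite -(ler_pM2r lr2).
  have -> : sg ^+ 2 / 2 * lam * (1 - lam) * r * (2 * (lam * r)) =
            (sg * (lam * r)) ^+ 2 * (1 - lam) by field.
  have -> : (D ^+ 2 / (2 * (lam * r)) - D ^+ 2 / (2 * r)) * (2 * (lam * r)) =
            D ^+ 2 * (1 - lam) by field; rewrite !gt_eqF.
  have sl0 : 0 <= sg * (lam * r) by rewrite mulr_ge0 // ltW.
  by rewrite ler_pM2r ?subr_gt0 // ler_pXn2r ?nnegrE // (le_trans sl0 far).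
have -> : lam * ((p - (a + D ^+ 2 / (2 * (lam * r)))) / (lam * r)) =
          (p - (a + D ^+ 2 / (2 * (lam * r)))) / r by field; rewrite !gt_eqF.
rewrite -(ler_pM2r r0) mulrDl !divfK ?gt_eqF //; lra.
Qed.

Lemma yosida_argmin_fin_num {r f x v} : yosida_argmin r f x v -> yosida d r f x \is a fin_num.
Proof.
by move=> vmin; rewrite (yosida_argminE vmin) fin_numD; case: vmin => -> _.
Qed.

Lemma yosida_quotientE {r f x} : f x \is a fin_num -> yosida d r f x \is a fin_num ->
  ((f x - yosida d r f x) * (r^-1)%:E)%E = (yosida_quotient r f x)%:E.
Proof. by move=> fx Y_fin; rewrite -(fineK fx) -(fineK Y_fin) -EFinB -EFinM. Qed.

Hypothesis d_metric : is_metric d.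

Let d_ge0 x y : 0 <= d x y. Proof. by case: d_metric. Qed.
Let d_xx x : d x x = 0. Proof. by case: d_metric => _ /(_ x x) [_ ->]. Qed.

Lemma yosida_le r f x : (yosida d r f x <= f x)%E.
Proof.
by apply: le_trans (yosida_le_energy r f x x) _; rewrite /yosida_energy d_xx expr2 !mul0r adde0.
Qed.

Lemma yosida_quotient_ge0 {r f x} : 0 < r -> f x \is a fin_num -> yosida d r f x \is a fin_num ->
  0 <= yosida_quotient r f x.
Proof.
move=> r0 fx Y_fin; apply: divr_ge0; last exact: ltW.
by rewrite subr_ge0 -lee_fin !fineK //; exact: yosida_le.
Qed.

Lemma relaxed_slope_le_slope f u : (forall v, f v != -oo%E) ->
  (relaxed_slope d f u <= slope d f u)%E.
Proof.
move=> fNy; case fu: (f u) => [a| |]; last by move: (fNy u); rewrite fu.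
- apply: ereal_inf_lbound; exists (fun=> u); last exact: (cvg_limn_einf_sup (cvg_cst _)).1.
  split; first exact: cvg_cst.
  by exists (Num.max 0 a) => n; rewrite d_xx fu lee_fin !le_max !lexx orbT.
- by rewrite /slope fu eqxx leey.
Qed.

Lemma slope_argmin_le {r f x v} : 0 < r -> (forall w, f w != -oo%E) ->
  yosida_argmin r f x v -> (slope d f v <= (d v x / r)%:E)%E.
Proof.
move=> r0 fNy [fv vmin]; case: d_metric => _ _ d_sym d_tri.
rewrite /slope; have [a fvE] : exists a, f v = a%:E by exists (fine (f v)); rewrite fineK.
rewrite fvE /=; apply/lee_addgt0Pr => e e0.
apply: le_trans (ereal_inf_lbound _) _; first by exists (2 * r * e) => //=; rewrite !mulr_gt0.
have dr_e_ge0 : 0 <= d v x / r + e by rewrite addr_ge0 ?divr_ge0 // ltW.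
apply: ge_ereal_sup => z [-> | [w /andP [w0 wr] <-]]; first by rewrite -EFinD lee_fin.
have := vmin w; rewrite /yosida_energy fvE.
case fw: (f w) => [b | | ]; last by move: (fNy w); rewrite fw.
- rewrite -!EFinD lee_fin => ab.
  rewrite -EFin_max -EFinM lee_fin ler_pdivrMr // ge_max.
  apply/andP; split; last by rewrite mulr_ge0 // ltW.
  apply: quadratic_drop_le ab => //; rewrite (d_sym v w); exact: d_tri.
- move=> _; have -> : maxe -oo%E 0%E = (0 : \bar R) by apply/max_idPr; exact: leNye.
  by rewrite mul0e -EFinD lee_fin.
Qed.

Lemma yosida_energy_coercive r f x ustar v (A B : R) :
  0 < B -> 0 < r -> r <= (8 * B)^-1 ->
  (forall w, ((- A - B * d w ustar ^+ 2)%:E <= f w)%E) ->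
  ((- A - 2 * B * d x ustar ^+ 2 + 2 * B * d v x ^+ 2)%:E <= yosida_energy r f x v)%E.
Proof.
move=> B0 r0 r_B f_lb; case: d_metric => _ _ _ d_tri.
have B8 : 0 < 8 * B by rewrite mulr_gt0.
have Br : 8 * B * r <= 1 by have := ler_wpM2l (ltW B8) r_B; rewrite mulfV ?lt0r_neq0.
apply: le_trans (leeD (f_lb v) (lexx _)); rewrite -EFinD lee_fin.
have quad_lb : 4 * B * d v x ^+ 2 <= d v x ^+ 2 / (2 * r).
  rewrite ler_pdivlMr ?mulr_gt0 //; have := sqr_ge0 (d v x); nra.
have tri_sqr : d v ustar ^+ 2 <= 2 * d v x ^+ 2 + 2 * d x ustar ^+ 2.
  have : d v ustar ^+ 2 <= (d v x + d x ustar) ^+ 2.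
    by rewrite ler_pXn2r ?nnegrE ?addr_ge0.
  have := sqr_ge0 (d v x - d x ustar); lra.
have := ler_wpM2l (ltW B0) tri_sqr; lra.
Qed.

Lemma yosida_argmin_of_minimizing {r f x} {ws : S^nat} {y M : R} :
  sigma_compatible d -> 0 < r -> (forall w, f w != -oo%E) ->
  bounded_lsc f -> bounded_sublevel_compact f ->
  yosida d r f x = y%:E ->
  (forall n, (yosida_energy r f x (ws n) <= (y + n.+1%:R^-1)%:E)%E) ->
  (forall n m, d (ws n) (ws m) <= M /\ (f (ws n) <= M%:E)%E) ->
  exists v, yosida_argmin r f x v.
Proof.
move=> d_sigma r0 fNy f_lsc f_cpt Y_y ws_min ws_bd.
have [h [v [h_incr ws_v]]] := f_cpt ws (ex_intro _ M ws_bd).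
have fv_le : (f v <= limn_einf (fun n => f (ws (h n))))%E.
  by apply: f_lsc ws_v; exists M => n m; exact: (ws_bd _ _).1.
have [a fv] : exists a, f v = a%:E.
  have : (f v <= M%:E)%E.
    by apply: le_trans fv_le _; apply: limn_einf_le_ub => n; exact: (ws_bd _ n).2.
  by move: (fNy v); case: (f v) => // a _ _; exists a.
have h_ge n : (n <= h n)%N by elim: n => // n IH; exact: leq_ltn_trans IH (h_incr n).
have : a + d v x ^+ 2 / (2 * r) <= y.
  apply: (@energy_liminf_le _ (fun n => f (ws (h n))) (fun n => d (ws (h n)) x)) => //.
  - by rewrite -fv.
  - exact: d_sigma.1 _ _ _ _ ws_v (cvg_cst x).
  - move=> n; apply: le_trans (ws_min (h n)) _.
    by rewrite lee_fin lerD2l lef_pV2 ?posrE ?ltr0n // ler_nat ltnS.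
move=> vmin; exists v; split; first by rewrite fv.
move=> w; apply: le_trans (yosida_le_energy r f x w).
by rewrite /yosida_energy fv -EFinD Y_y lee_fin.
Qed.

Lemma yosida_argmin_exists {r f x ustar} {A B : R} :
  sigma_compatible d -> 0 < B -> 0 < r -> r <= (8 * B)^-1 ->
  (forall w, f w != -oo%E) ->
  (forall w, ((- A - B * d w ustar ^+ 2)%:E <= f w)%E) ->
  bounded_lsc f -> bounded_sublevel_compact f ->
  f x \is a fin_num -> exists v, yosida_argmin r f x v.
Proof.
move=> d_sigma B0 r0 r_B fNy f_lb f_lsc f_cpt fx.
case: d_metric => _ _ d_sym d_tri.
pose K := A + 2 * B * d x ustar ^+ 2.
have energy_lb w : ((- K + 2 * B * d w x ^+ 2)%:E <= yosida_energy r f x w)%E.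
  by rewrite /K opprD; exact: yosida_energy_coercive.
have Y_lb : ((- K)%:E <= yosida d r f x)%E.
  apply: le_ereal_inf_tmp => _ [w _ <-]; apply: le_trans (energy_lb w).
  by rewrite lee_fin lerDl mulr_ge0 ?sqr_ge0 // mulr_ge0 // ltW.
have [y Y_y] : exists y, yosida d r f x = y%:E.
  move: Y_lb (yosida_le r f x); rewrite -(fineK fx).
  by case: (yosida d r f x) => [y | | ] // _ _; exists y.
have almost_min n : exists w, (yosida_energy r f x w <= (y + n.+1%:R^-1)%:E)%E.
  have : (yosida d r f x < (y + n.+1%:R^-1)%:E)%E by rewrite Y_y lte_fin ltrDl.
  by move=> /ereal_inf_lt [_ [w _ <-] /ltW]; exists w.
have [ws ws_min] := choice almost_min.
pose D := (y + 1 + K) / (2 * B).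
have ws_bd n : d (ws n) x ^+ 2 <= D /\ (f (ws n) <= (y + 1)%:E)%E.
  have E_le : (yosida_energy r f x (ws n) <= (y + 1)%:E)%E.
    by apply: le_trans (ws_min n) _; rewrite lee_fin lerD2l invf_le1 ?ltr0n // ler1n.
  split.
    have := le_trans (energy_lb (ws n)) E_le; rewrite lee_fin /D ler_pdivlMr ?mulr_gt0 //.
    lra.
  apply: le_trans E_le; rewrite /yosida_energy leeDl // lee_fin.
  by rewrite divr_ge0 ?sqr_ge0 // mulr_ge0 // ltW.
have sq_le w : d w x <= 1 + d w x ^+ 2 by have := d_ge0 w x; nra.
apply: (yosida_argmin_of_minimizing (M := Num.max (2 * (1 + D)) (y + 1)) d_sigma r0 fNy
  f_lsc f_cpt Y_y ws_min) => n m; split.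
  rewrite le_max; apply/orP; left; apply: le_trans (d_tri _ x _) _; rewrite (d_sym x).
  have := sq_le (ws n); have := sq_le (ws m); have := (ws_bd n).1; have := (ws_bd m).1.
  lra.
by apply: le_trans (ws_bd n).2 _; rewrite lee_fin le_max lexx orbT.
Qed.

Lemma yosida_quotient_ge_half_sqr {tau sg f x} : 0 < tau -> 0 <= sg -> f x \is a fin_num ->
  (forall r, 0 < r <= tau -> exists v, yosida_argmin r f x v) ->
  (forall r v, 0 < r <= tau -> yosida_argmin r f x v -> sg * r <= d v x) ->
  sg ^+ 2 / 2 <= yosida_quotient tau f x.
Proof.
move=> tau0 sg0 fx argmin_ex far.
have Y_fin r : 0 < r <= tau -> yosida d r f x \is a fin_num.
  by move=> /argmin_ex [v /yosida_argmin_fin_num].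
apply: (@ge_of_self_improving _ (fun r => yosida_quotient r f x) _ tau)
  => [r r_tau | r lam r_tau lam01 |]; last by rewrite tau0 lexx.
  by apply: yosida_quotient_ge0 fx (Y_fin _ r_tau); case/andP: r_tau.
have [r0 r_le] := andP r_tau; have [lam0 lam1] := andP lam01.
have lr_tau : 0 < lam * r <= tau.
  by rewrite mulr_gt0 //=; apply: le_trans r_le; rewrite ler_piMl ?ltW.
have [v vmin] := argmin_ex _ lr_tau.
exact: yosida_quotient_step r0 lam01 sg0 (Y_fin _ r_tau) vmin (far _ _ lr_tau vmin).
Qed.

End MoreauYosida.

Arguments yosida_argmin {R S} d r f x v.
Arguments yosida_quotient {R S} d r f x.

Section ArgminDistance.
Context {R : realType} {S : topologicalType} {d : S -> S -> R}.
Context {phi : S -> \bar R} {phie : R -> S -> \bar R} {eps : R -> R} {u : S} {ut : R -> S}.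
Hypotheses (d_metric : is_metric d) (d_sigma : sigma_compatible d).
Hypothesis phie_range : forall e, 0 < e -> forall v, phie e v != -oo%E.
Hypothesis slope_lsc : forall (epsn : nat -> R) (un : nat -> S) (w : S),
  (forall n, 0 < epsn n) -> epsn @ \oo --> (0 : R) -> un @ \oo --> w ->
  (slope d phi w <= limn_einf (fun n => slope d (phie (epsn n)) (un n)))%E.
Hypotheses (eps_gt0 : forall tau, 0 < tau -> 0 < eps tau) (eps_0 : eps @ 0^'+ --> (0 : R)).
Hypothesis ut_u : ut @ 0^'+ --> u.

Lemma slope_le_of_close_argmins {sg : R} {ts rs : R^nat} {vs : S^nat} :
  0 <= sg -> (forall n, 0 < ts n) -> ts @ \oo --> (0 : R) -> (forall n, 0 < rs n <= ts n) ->
  (forall n, yosida_argmin d (rs n) (phie (eps (ts n))) (ut (ts n)) (vs n)) ->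
  (forall n, d (vs n) (ut (ts n)) <= sg * rs n) -> (slope d phi u <= sg%:E)%E.
Proof.
move=> sg0 ts_gt0 ts_0 rs_ts vs_min vs_close.
case: d_metric => d_ge0 _ d_sym _.
have ts_0r := cvg_at_right_seq ts_gt0 ts_0.
have eps_ts : (eps \o ts) @ \oo --> (0 : R) := cvg_comp _ _ ts_0r eps_0.
have ut_ts : (ut \o ts) @ \oo --> u := cvg_comp _ _ ts_0r ut_u.
have dist_0 : (fun n => d ((ut \o ts) n) (vs n)) @ \oo --> (0 : R).
  apply: (squeeze_cvgr _ (cvg_cst 0)); last by rewrite -(mulr0 sg); apply: cvgMr ts_0.
  apply: nearW => n /=; rewrite d_ge0 d_sym /=; apply: le_trans (vs_close n) _.
  by case/andP: (rs_ts n) => _; exact: ler_wpM2l.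
have vs_u : vs @ \oo --> u := d_sigma.2 _ _ _ dist_0 ut_ts.
apply: le_trans (slope_lsc _ _ _ (fun n => eps_gt0 _ (ts_gt0 n)) eps_ts vs_u) _.
apply: limn_einf_le_ub => n; case/andP: (rs_ts n) => rs_gt0 _.
have phie_n := phie_range _ (eps_gt0 _ (ts_gt0 n)).
apply: le_trans (slope_argmin_le d_metric rs_gt0 phie_n (vs_min n)) _.
by rewrite lee_fin ler_pdivrMr.
Qed.

Lemma yosida_argmin_dist_ge {sg : R} : 0 <= sg -> (sg%:E < slope d phi u)%E ->
  exists2 del, 0 < del & forall tau r v, 0 < tau < del -> 0 < r <= tau ->
    yosida_argmin d r (phie (eps tau)) (ut tau) v -> sg * r <= d v (ut tau).
Proof.
move=> sg0 sg_lt; apply: contrapT => no_del.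
have close n : exists p : R * R * S, [/\ 0 < p.1.1 < n.+1%:R^-1, 0 < p.1.2 <= p.1.1,
    yosida_argmin d p.1.2 (phie (eps p.1.1)) (ut p.1.1) p.2 & d p.2 (ut p.1.1) < sg * p.1.2].
  apply: contrapT => /forallNP no_close; apply: no_del.
  exists n.+1%:R^-1 => // tau r v tau_n r_tau vmin.
  by rewrite leNgt; apply/negP => far; exact: (no_close (tau, r, v)).
have [p /all_and4 [ts_n rs_ts vs_min vs_close]] := choice close.
have ts_gt0 n : 0 < (p n).1.1 by case/andP: (ts_n n).
have ts_0 : (fun n => (p n).1.1) @ \oo --> (0 : R).
  apply: (squeeze_cvgr _ (cvg_cst 0) (@cvg_harmonic R)).
  by apply: nearW => n /=; case/andP: (ts_n n) => /ltW -> /ltW.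
have := slope_le_of_close_argmins sg0 ts_gt0 ts_0 rs_ts vs_min (fun n => ltW (vs_close n)).
by rewrite leNgt sg_lt.
Qed.

End ArgminDistance.

Theorem proposition5p2 (R : realType) (S : topologicalType) (d : S -> S -> R)
  (phi : S -> \bar R) (phie : R -> S -> \bar R) (A B : R) (ustar : S)
  (Hmetric : is_metric d) (Hcomplete : d_complete d)
  (Hhaus : hausdorff_space S) (Hcompat : sigma_compatible d)
  (Hphi_range : forall v, phi v != -oo%E)
  (Hphie_range : forall eps, 0 < eps -> forall v, phie eps v != -oo%E)
  (Hphi_dom : exists v, (phi v < +oo)%E)
  (Hphie_dom : forall eps, 0 < eps -> exists v, (phie eps v < +oo)%E)
  (HA : 0 < A) (HB : 0 < B)
  (Hlow : forall eps, 0 < eps -> forall v,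
     ((- A - B * d v ustar ^+ 2)%:E <= phie eps v)%E)
  (Hlsc : forall eps, 0 < eps -> forall (un : nat -> S) (u : S),
     (exists M : R, forall n m, d (un n) (un m) <= M) ->
     un @ \oo --> u ->
     (phie eps u <= limn_einf (fun n => phie eps (un n)))%E)
  (Hcpt : forall eps, 0 < eps -> forall un : nat -> S,
     (exists M : R, forall n m, d (un n) (un m) <= M /\ (phie eps (un n) <= M%:E)%E) ->
     exists (h : nat -> nat) (u : S),
       (forall n, (h n < h n.+1)%N) /\ (fun n => un (h n)) @ \oo --> u)
  (Hslope : forall (epsn : nat -> R) (un : nat -> S) (u : S),
     (forall n, 0 < epsn n) -> epsn @ \oo --> (0 : R) -> un @ \oo --> u ->
     (slope d phi u <= limn_einf (fun n => slope d (phie (epsn n)) (un n)))%E)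
  (eps : R -> R) (Heps_pos : forall tau, 0 < tau -> 0 < eps tau)
  (Heps_lim : eps @ 0^'+ --> (0 : R)) :
  forall (u : S) (ut : R -> S),
    ut @ 0^'+ --> u ->
    (exists M : R, forall tau, 0 < tau ->
       (phie (eps tau) (ut tau) <= M%:E)%E /\ d (ut tau) u <= M) ->
    ((2^-1)%:E * (relaxed_slope d phi u * relaxed_slope d phi u)
      <= liminf0 (fun tau =>
           (phie (eps tau) (ut tau) - yosida d tau (phie (eps tau)) (ut tau))
             * (tau^-1)%:E))%E.
Proof.
move=> u ut ut_u [M ut_bd].
have phie_ut_fin tau : 0 < tau -> phie (eps tau) (ut tau) \is a fin_num.
  move=> tau0; rewrite fin_numE Hphie_range ?Heps_pos //=.
  by rewrite -ltey (le_lt_trans (ut_bd _ tau0).1 (ltry _)).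
have argmin_ex tau r : 0 < tau < (8 * B)^-1 -> 0 < r <= tau ->
    exists v, yosida_argmin d r (phie (eps tau)) (ut tau) v.
  move=> /andP[tau0 tau_B] /andP[r0 r_tau]; have e0 := Heps_pos _ tau0.
  exact: (yosida_argmin_exists (x := ut tau) Hmetric Hcompat HB r0 (ltW (le_lt_trans r_tau tau_B))
    (Hphie_range _ e0) (Hlow _ e0) (Hlsc _ e0) (Hcpt _ e0) (phie_ut_fin _ tau0)).
have Y_fin tau : 0 < tau < (8 * B)^-1 -> yosida d tau (phie (eps tau)) (ut tau) \is a fin_num.
  move=> /[dup] tau_B /andP[tau0 _].
  by have [|v /yosida_argmin_fin_num //] := argmin_ex _ tau tau_B; rewrite tau0 lexx.
have quotientE tau : 0 < tau < (8 * B)^-1 ->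
    ((phie (eps tau) (ut tau) - yosida d tau (phie (eps tau)) (ut tau)) * (tau^-1)%:E)%E =
    (yosida_quotient d tau (phie (eps tau)) (ut tau))%:E.
  move=> /[dup] /Y_fin Y_fin_tau /andP[tau0 _].
  exact: yosida_quotientE (phie_ut_fin _ tau0) Y_fin_tau.
apply: half_sqr_le (relaxed_slope_ge0 _ _) _ _.
  apply: (@liminf0_ge _ _ _ (8 * B)^-1); first by rewrite invr_gt0 mulr_gt0.
  move=> tau /[dup] tau_B /andP[tau0 _]; rewrite quotientE // lee_fin.
  by apply: (yosida_quotient_ge0 Hmetric tau0 (phie_ut_fin _ tau0)); exact: Y_fin.
move=> sg sg0 /lt_le_trans /(_ (relaxed_slope_le_slope Hmetric phi u Hphi_range)) sg_lt.
have [del del0 far] :=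
  yosida_argmin_dist_ge Hmetric Hcompat Hphie_range Hslope Heps_pos Heps_lim ut_u sg0 sg_lt.
apply: (@liminf0_ge _ _ _ (Num.min del (8 * B)^-1)); first by rewrite lt_min del0 invr_gt0 mulr_gt0.
move=> tau /andP[tau0]; rewrite lt_min => /andP[tau_del tau_B].
rewrite quotientE ?tau0 // lee_fin.
apply: (yosida_quotient_ge_half_sqr Hmetric tau0 sg0 (phie_ut_fin _ tau0)).
  by move=> r; apply: argmin_ex; rewrite tau0.
by move=> r v r_tau vmin; apply: (far _ _ _ _ r_tau vmin); rewrite tau0.
Qed.
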